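(* Let $\psi:\mathbb{R}^r\to\mathbb{R}$, let $S\subseteq\mathbb{R}^r$ be nonempty and closed, let $\bar z\in S$, and suppose $\psi$ is twice semidifferentiable at $\bar z$. (i) If $\bar z$ is a local minimizer of $\psi$ on $S$, then $\mathrm{d}\psi(\bar z)(w)\ge0$ for all $w\in T_S(\bar z)$, and for every $w\in T_S(\bar z)$ with $\mathrm{d}\psi(\bar z)(w)=0$, $$\mathrm{d}^2\psi(\bar z)(w)+\mathrm{d}^2\delta_S(\bar z;-\mathrm{d}\psi(\bar z))(w)\ge 0.$$ (ii) Suppose $\mathrm{d}\psi(\bar z)(w)\ge0$ for all $w\in T_S(\bar z)$ and that for every $w\in T_S(\bar z)\setminus\{0\}$ with $\mathrm{d}\psi(\bar z)(w)=0$, $$\mathrm{d}^2\psi(\bar z)(w)+\mathrm{d}^2\delta_S(\bar z;-\mathrm{d}\psi(\bar z))(w)>0.$$ Then there exist $\varepsilon>0$ and $\eta>0$ such that $\psi(z)\ge\psi(\bar z)+\varepsilon\|z-\bar z\|^2$ for all $z\in S\cap\mathbb{B}_\eta(\bar z)$; in particular $\bar z$ is a local minimizer of $\psi$ on $S$.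
   Context: $\mathbb{B}_\eta(z)$ is the closed Euclidean ball of radius $\eta$ centered at $z$. For $\psi:\mathbb{R}^r\to\mathbb{R}$ and $\bar z,w\in\mathbb{R}^r$: the subderivative is $\mathrm{d}\psi(\bar z)(w):=\liminf_{t\downarrow0,\,w'\to w}\frac{\psi(\bar z+tw')-\psi(\bar z)}{t}$; $\psi$ is semidifferentiable at $\bar z$ if for every $w$ the limit $\lim_{t\downarrow0,\,w'\to w}\frac{\psi(\bar z+tw')-\psi(\bar z)}{t}$ exists as a real number. The second subderivative is $\mathrm{d}^2\psi(\bar z)(w):=\liminf_{t\downarrow0,\,w'\to w}\frac{\psi(\bar z+tw')-\psi(\bar z)-t\,\mathrm{d}\psi(\bar z)(w')}{\frac12 t^2}$, and $\psi$ is twice semidifferentiable at $\bar z$ if it is semidifferentiable at $\bar z$ and for every $w$ this liminf is a limit and is a real number. $T_S(\bar z)$ is the tangent cone: $w\in T_S(\bar z)$ iff there are $t_k\downarrow0$, $w_k\to w$ with $\bar z+t_kw_k\in S$. For closed $S$, $\bar z\in S$ and $\varphi:\mathbb{R}^r\to\mathbb{R}$, define $\mathrm{d}^2\delta_S(\bar z;\varphi)(w):=\liminf_{t\downarrow0,\,w'\to w,\ \bar z+tw'\in S}\frac{-2\varphi(w')}{t}$ (equal to $+\infty$ if there are no such $t,w'$); thus $\mathrm{d}^2\delta_S(\bar z;-\mathrm{d}\psi(\bar z))(w)=\liminf_{t\downarrow0,\,w'\to w,\ \bar z+tw'\in S}\frac{2\,\mathrm{d}\psi(\bar z)(w')}{t}$.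 *)

From HB Require Import structures.
From mathcomp Require Import all_boot all_order all_algebra.
From mathcomp Require Import all_classical all_reals all_analysis.
Set Implicit Arguments. Unset Strict Implicit. Unset Printing Implicit Defensive.
Import Order.TTheory GRing.Theory Num.Theory.
Import numFieldNormedType.Exports.
Local Open Scope classical_set_scope.
Local Open Scope ring_scope.

Section Defs.
Variables (R : realType) (r : nat).
Local Notation V := 'rV[R]_r.

Definition enorm (v : V) : R := Num.sqrt (\sum_(i < r) (v ord0 i) ^+ 2).

(* liminf_{t \downarrow 0, w' -> w, C t w'} f t w'  (= +oo if no admissible (t,w')) *)
Definition liminf_tw (C : R -> V -> Prop) (f : R -> V -> \bar R) (w : V) : \bar R :=
  ereal_sup [set ereal_inf [set y | exists (t : R) (w' : V),
                               0 < t < d /\ enorm (w' - w) < d /\ C t w' /\ y = f t w']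
            | d in [set d : R | 0 < d]].

Definition dq1 (psi : V -> R) (z : V) (t : R) (w' : V) : R :=
  (psi (z + t *: w') - psi z) / t.

Definition dsub (psi : V -> R) (z w : V) : \bar R :=
  liminf_tw (fun _ _ => True) (fun t w' => (dq1 psi z t w')%:E) w.

Definition dq2 (psi : V -> R) (z : V) (t : R) (w' : V) : \bar R :=
  (((psi (z + t *: w') - psi z)%:E - t%:E * dsub psi z w') * (2 / t ^+ 2)%:E)%E.

Definition d2sub (psi : V -> R) (z w : V) : \bar R :=
  liminf_tw (fun _ _ => True) (dq2 psi z) w.

Definition semidiff (psi : V -> R) (z : V) : Prop :=
  forall w, exists L : R, forall eps : R, 0 < eps -> exists d : R, 0 < d /\
    forall t w', 0 < t < d -> enorm (w' - w) < d -> `|dq1 psi z t w' - L| < eps.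

Definition twice_semidiff (psi : V -> R) (z : V) : Prop :=
  semidiff psi z /\
  forall w, exists L : R, forall eps : R, 0 < eps -> exists d : R, 0 < d /\
    forall t w', 0 < t < d -> enorm (w' - w) < d ->
      (`|dq2 psi z t w' - L%:E| < eps%:E)%E.

Definition tangent_cone (S : set V) (z w : V) : Prop :=
  exists (tk : nat -> R) (wk : nat -> V),
    (forall k, 0 < tk k) /\ (forall k, S (z + tk k *: wk k)) /\
    (forall eps : R, 0 < eps -> exists N : nat, forall k, (N <= k)%N ->
        `|tk k| < eps /\ enorm (wk k - w) < eps).

Definition d2delta (S : set V) (z : V) (phi : V -> \bar R) (w : V) : \bar R :=
  liminf_tw (fun t w' => S (z + t *: w'))
            (fun t w' => ((- 2)%:E * phi w' * (t^-1)%:E)%E) w.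

Definition local_min_on (psi : V -> R) (S : set V) (z : V) : Prop :=
  S z /\ exists eta : R, 0 < eta /\
    forall x, S x -> enorm (x - z) <= eta -> psi z <= psi x.

End Defs.

From HB Require Import structures.
From mathcomp Require Import all_boot all_order all_algebra.
From mathcomp Require Import all_classical all_reals all_analysis.
From mathcomp Require Import ring lra.
Set Implicit Arguments. Unset Strict Implicit. Unset Printing Implicit Defensive.
Import Order.TTheory GRing.Theory Num.Theory.
Import numFieldNormedType.Exports.
Local Open Scope classical_set_scope.
Local Open Scope ring_scope.

(* (i) Along a tangent sequence [z + t_k w_k] in [S] the first-order difference
   quotients are nonnegative by minimality and converge to [dψ(z)(w)].  At second
   order, [ψ(z + t w') - ψ(z) >= 0] on [S] splits, after scaling by [2 / t^2], into
   the second-order quotient, which tends to [d²ψ(z)(w)], plus [2 dψ(z)(w') / t],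
   whose liminf over [S] is [d²δ_S(z; -dψ(z))(w)].
   (ii) If quadratic growth fails, there are [z_k] in [S] with
   [t_k = ‖z_k - z‖ <= 1/(k+1)] and [ψ(z_k) - ψ(z) < t_k^2/(k+1)].  The directions
   [(z_k - z) / t_k] are unit vectors, so they cluster at some [w != 0]; [w] is
   tangent, and along the same sequence [dψ(z)(w) <= 0], hence [dψ(z)(w) = 0], and
   [d²ψ(z)(w) + d²δ_S(z; -dψ(z))(w) <= 0], contradicting the hypothesis. *)

Section SecondOrderConditions.
Variables (R : realType) (r : nat).
Local Notation V := 'rV[R]_r.

Lemma enorm_ge0 (v : V) : 0 <= enorm v.
Proof. exact: sqrtr_ge0. Qed.

Lemma enorm_coord_le (v : V) i : `|v ord0 i| <= enorm v.
Proof.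
rewrite /enorm -sqrtr_sqr ler_sqrt; last by apply: sumr_ge0 => j _; apply: sqr_ge0.
by rewrite (bigD1 i) //= lerDl; apply: sumr_ge0 => j _; apply: sqr_ge0.
Qed.

Lemma enorm_le_coord (v : V) (c : R) : 0 <= c -> (forall i, `|v ord0 i| <= c) ->
  enorm v <= r%:R * c.
Proof.
move=> c0 vc.
rewrite /enorm -(ger0_norm (_ : 0 <= r%:R * c)) ?mulr_ge0 // -sqrtr_sqr ler_sqrt;
  last exact: sqr_ge0.
apply: (@le_trans _ _ (\sum_(i < r) c ^+ 2)).
  by apply: ler_sum => i _; rewrite -real_normK ?num_real // lerXn2r ?nnegrE.
rewrite sumr_const card_ord -[c ^+ 2 *+ r]mulr_natl exprMn.
have r_le_r2 : (r%:R : R) <= r%:R ^+ 2.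
  by rewrite -natrX ler_nat; case: r => // n; rewrite expnS leq_pmulr // expn_gt0.
by apply: ler_wpM2r; rewrite ?sqr_ge0.
Qed.

Lemma enormZ t (v : V) : enorm (t *: v) = `|t| * enorm v.
Proof.
rewrite /enorm -sqrtr_sqr -sqrtrM ?sqr_ge0 //; congr Num.sqrt.
by rewrite mulr_sumr; apply: eq_bigr => i _; rewrite mxE exprMn.
Qed.

Lemma enorm0 : enorm (0 : V) = 0.
Proof. by rewrite -(scale0r (0 : V)) enormZ normr0 mul0r. Qed.

Lemma enorm_eq0 (v : V) : enorm v = 0 -> v = 0.
Proof.
move=> v0; apply/rowP => i; rewrite mxE; apply/eqP; rewrite -normr_eq0.
by rewrite eq_le normr_ge0 andbT -v0 enorm_coord_le.
Qed.

(* The constant [r] comes from the coordinatewise triangle inequality; it spares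
   us Cauchy-Schwarz and is harmless for the smallness estimates below. *)
Lemma enormD_le (a b : V) : enorm (a + b) <= r%:R * (enorm a + enorm b).
Proof.
apply: enorm_le_coord; first by rewrite addr_ge0 ?enorm_ge0.
move=> i; rewrite mxE; apply: le_trans (ler_normD _ _) _.
by rewrite lerD ?enorm_coord_le.
Qed.

Lemma enormZ_small (w : V) eta : 0 < eta -> exists d, 0 < d /\
  forall t w', 0 < t < d -> enorm (w' - w) < d -> enorm (t *: w') <= eta.
Proof.
move=> eta0; pose M := r%:R * (enorm w + 1) + 1.
have M0 : 0 < M by rewrite ltr_pwDr // mulr_ge0 // addr_ge0 ?enorm_ge0.
exists (Num.min 1 (eta / M)); split; first by rewrite lt_min ltr01 divr_gt0.
move=> t w' /andP[t0]; rewrite !lt_min => /andP[_ tM] /andP[w'w _].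
have w'M : enorm w' <= M.
  have := enormD_le w (w' - w); rewrite addrC subrK => /le_trans; apply.
  by rewrite ler_wpDr // ler_wpM2l // lerD2l ltW.
rewrite enormZ gtr0_norm //; apply: le_trans (ler_wpM2l (ltW t0) w'M) _.
by rewrite -ler_pdivlMr // ltW.
Qed.


Definition lim_tw (g : R -> V -> R) (w : V) (L : R) : Prop :=
  forall eps, 0 < eps -> exists d, 0 < d /\
    forall t w', 0 < t < d -> enorm (w' - w) < d -> `|g t w' - L| < eps.

Lemma lim_tw_ge (g : R -> V -> R) w L a : lim_tw g w L ->
  (forall d, 0 < d -> exists t w', [/\ 0 < t < d, enorm (w' - w) < d & a <= g t w']) ->
  a <= L.
Proof.
move=> gL near_w; rewrite leNgt; apply/negP => La.
have [d [d0 gLd]] := gL (a - L) (ltac:(by rewrite subr_gt0)).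
have [t [w' [td w'd ag]]] := near_w d d0.
by have := gLd t w' td w'd; rewrite ltr_norml => /andP[_]; lra.
Qed.

Lemma lim_tw_le (g : R -> V -> R) w L a : lim_tw g w L ->
  (forall d, 0 < d -> exists t w', [/\ 0 < t < d, enorm (w' - w) < d & g t w' <= a]) ->
  L <= a.
Proof.
move=> gL near_w; rewrite -lerN2.
have NgL : lim_tw (fun t w' => - g t w') w (- L).
  move=> e /gL[d [d0 gLd]]; exists d; split=> // t w' td w'd.
  by rewrite -opprD normrN; apply: gLd.
apply: (lim_tw_ge NgL) => d /near_w[t [w' [td w'd ga]]].
by exists t, w'; rewrite lerN2.
Qed.

Lemma liminf_tw_ge (C : R -> V -> Prop) (f : R -> V -> \bar R) w (a : \bar R) d :
  0 < d -> (forall t w', 0 < t < d -> enorm (w' - w) < d -> C t w' -> (a <= f t w')%E) ->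
  (a <= liminf_tw C f w)%E.
Proof.
move=> d0 af; apply: le_trans (ereal_sup_ubound _); last by exists d.
by apply: le_ereal_inf_tmp => _ [t [w' [td [w'd [Ctw' ->]]]]]; apply: af.
Qed.

Lemma liminf_tw_le (C : R -> V -> Prop) (f : R -> V -> \bar R) w (a : \bar R) :
  (forall d, 0 < d ->
     exists t w', [/\ 0 < t < d, enorm (w' - w) < d, C t w' & (f t w' <= a)%E]) ->
  (liminf_tw C f w <= a)%E.
Proof.
move=> near_w; apply: ge_ereal_sup => _ [d d0 <-].
have [t [w' [td w'd Ctw' fa]]] := near_w d d0.
by apply: le_trans fa; apply: ereal_inf_lbound; exists t, w'.
Qed.

Lemma liminf_tw_lim (g : R -> V -> R) w L : lim_tw g w L ->
  liminf_tw (fun _ _ => True) (fun t w' => (g t w')%:E) w = L%:E.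
Proof.
move=> gL; apply/eqP; rewrite eq_le; apply/andP; split.
- apply/lee_addgt0Pr => e /gL[d [d0 gLd]]; apply: liminf_tw_le => d' d'0.
  have m0 : 0 < Num.min d d' by rewrite lt_min d0.
  have [md md'] : Num.min d d' <= d /\ Num.min d d' <= d' by rewrite !ge_min !lexx orbT.
  pose t := Num.min d d' / 2.
  have [t0 td td'] : [/\ 0 < t, t < d & t < d'] by rewrite /t; split; lra.
  exists t, w; rewrite subrr enorm0 t0; split=> //.
  have := gLd t w; rewrite subrr enorm0 t0 td => /(_ isT d0).
  by rewrite -EFinD lee_fin ltr_norml => /andP[_]; lra.
- apply/lee_subgt0Pr => e /gL[d [d0 gLd]]; apply: (liminf_tw_ge d0) => t w' td w'd _.
  by rewrite -EFinB lee_fin; have := gLd t w' td w'd; rewrite ltr_norml => /andP[]; lra.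
Qed.

Definition dsubr (psi : V -> R) (z w : V) : R := fine (dsub psi z w).

Lemma dsub_lim (psi : V -> R) z w L : lim_tw (dq1 psi z) w L -> dsub psi z w = L%:E.
Proof. exact: liminf_tw_lim. Qed.

Lemma semidiff_lim (psi : V -> R) z w : semidiff psi z -> lim_tw (dq1 psi z) w (dsubr psi z w).
Proof. by move=> /(_ w)[L psiL]; rewrite /dsubr (dsub_lim psiL). Qed.

Lemma dsubE (psi : V -> R) z w : semidiff psi z -> dsub psi z w = (dsubr psi z w)%:E.
Proof. by move=> /(semidiff_lim w)/dsub_lim. Qed.

Definition dq2r (psi : V -> R) (z : V) (t : R) (w' : V) : R :=
  (psi (z + t *: w') - psi z - t * dsubr psi z w') * (2 / t ^+ 2).

Lemma dq2E (psi : V -> R) z t w' : semidiff psi z -> dq2 psi z t w' = (dq2r psi z t w')%:E.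
Proof. by move=> sd; rewrite /dq2 (dsubE w' sd) -EFinM. Qed.

Lemma dq2rE (psi : V -> R) z t w' : t != 0 ->
  dq2r psi z t w' = (psi (z + t *: w') - psi z) * (2 / t ^+ 2) - 2 * dsubr psi z w' / t.
Proof. by move=> t0; rewrite /dq2r; field. Qed.

Lemma d2sub_lim (psi : V -> R) z w : twice_semidiff psi z ->
  exists L, d2sub psi z w = L%:E /\ lim_tw (dq2r psi z) w L.
Proof.
move=> [sd /(_ w)[L psiL]].
have dq2rL : lim_tw (dq2r psi z) w L.
  move=> e /psiL[d [d0 psiLd]]; exists d; split=> // t w' td w'd.
  by have := psiLd t w' td w'd; rewrite dq2E // -EFinB lte_fin.
exists L; split=> //; rewrite -(liminf_tw_lim dq2rL) /d2sub.
by congr liminf_tw; apply/funext => t; apply/funext => w'; rewrite dq2E.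
Qed.

Lemma d2delta_quotE (psi : V -> R) z t w' : semidiff psi z ->
  ((- 2)%:E * (- dsub psi z w') * (t^-1)%:E)%E = (2 * dsubr psi z w' / t)%:E.
Proof. by move=> sd; rewrite (dsubE w' sd) -EFinN -!EFinM mulrNN. Qed.

Lemma local_min_window (psi : V -> R) S z w : local_min_on psi S z ->
  exists d, 0 < d /\ forall t w', 0 < t < d -> enorm (w' - w) < d ->
    S (z + t *: w') -> psi z <= psi (z + t *: w').
Proof.
move=> [_ [eta [eta0 zmin]]]; have [d [d0 small]] := enormZ_small w eta0.
exists d; split=> // t w' td w'd Sz; apply: zmin => //.
by rewrite [z + _]addrC addrK; apply: small.
Qed.

Lemma dsub_ge0_local_min (psi : V -> R) S z : semidiff psi z -> local_min_on psi S z ->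
  forall w, tangent_cone S z w -> (0 <= dsub psi z w)%E.
Proof.
move=> sd zmin w [tk [wk [tk0 [Sk tkwk]]]].
have [d0 [d00 zmin_d0]] := local_min_window w zmin.
rewrite dsubE // lee_fin; apply: (lim_tw_ge (semidiff_lim w sd)) => d d_gt0.
have m0 : 0 < Num.min d d0 by rewrite lt_min d_gt0 d00.
have [N /(_ N (leqnn N))] := tkwk _ m0.
rewrite gtr0_norm // !lt_min => -[/andP[td td0] /andP[wd wd0]].
exists (tk N), (wk N); rewrite tk0 td; split=> //.
by rewrite /dq1 divr_ge0 ?(ltW (tk0 N)) // subr_ge0 zmin_d0 ?tk0.
Qed.

Lemma d2_sum_ge0_local_min (psi : V -> R) S z : twice_semidiff psi z ->
  local_min_on psi S z -> forall w,
  (0 <= d2sub psi z w + d2delta S z (fun w' => - dsub psi z w') w)%E.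
Proof.
move=> tsd zmin w; have sd := tsd.1; have [L [-> dq2rL]] := d2sub_lim w tsd.
have [d0 [d00 zmin_d0]] := local_min_window w zmin.
suff : ((- L)%:E <= d2delta S z (fun w' => - dsub psi z w') w)%E.
  by move/(leeD2l L%:E); rewrite -EFinD subrr.
apply/lee_subgt0Pr => e e0; have [d [d_gt0 dq2rLd]] := dq2rL e e0.
apply: (@liminf_tw_ge _ _ _ _ (Num.min d d0)); first by rewrite lt_min d_gt0 d00.
move=> t w' /andP[t0]; rewrite !lt_min => /andP[td td0] /andP[wd wd0] Sz.
rewrite d2delta_quotE // -EFinB lee_fin.
have := dq2rLd t w'; rewrite t0 td => /(_ isT wd).
rewrite dq2rE ?gt_eqF // ltr_norml => /andP[_].
have : 0 <= (psi (z + t *: w') - psi z) * (2 / t ^+ 2).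
  by rewrite mulr_ge0 ?divr_ge0 ?sqr_ge0 // subr_ge0 zmin_d0 // t0.
lra.
Qed.

Definition quadratic_growth (psi : V -> R) (S : set V) (z : V) : Prop :=
  exists eps, 0 < eps /\ exists eta, 0 < eta /\
    forall x, S x -> enorm (x - z) <= eta -> psi z + eps * enorm (x - z) ^+ 2 <= psi x.

Lemma quadratic_growth_local_min (psi : V -> R) S z :
  S z -> quadratic_growth psi S z -> local_min_on psi S z.
Proof.
move=> Sz [eps [eps0 [eta [eta0 growth]]]]; split=> //; exists eta; split=> // x Sx xz.
by apply: le_trans (growth x Sx xz); rewrite lerDl mulr_ge0 ?sqr_ge0 ?(ltW eps0).
Qed.

Definition inv_succ (n : nat) : R := n.+1%:R^-1.

Lemma inv_succ_gt0 n : 0 < inv_succ n.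
Proof. by rewrite invr_gt0 ltr0n. Qed.

Lemma inv_succ_le1 n : inv_succ n <= 1.
Proof. by rewrite invf_le1 ?ler1n ?ltr0n. Qed.

Lemma inv_succ_le m n : (m <= n)%N -> inv_succ n <= inv_succ m.
Proof. by move=> mn; rewrite lef_pV2 ?posrE ?ltr0n // ler_nat ltnS. Qed.

Lemma inv_succ_lt (e : R) : 0 < e -> exists n, inv_succ n < e.
Proof.
move=> e0; exists (Num.trunc e^-1).
by rewrite -[e in _ < e]invrK ltf_pV2 ?posrE ?invr_gt0 ?ltr0n // truncnS_gt.
Qed.

Lemma bounded_seq_cluster (u : nat -> V) : (forall k, enorm (u k) <= 1) ->
  exists w, forall e, 0 < e -> forall N, exists k, (N <= k)%N /\ enorm (u k - w) < e.
Proof.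
move=> u_le1.
pose A := [set v : V | forall i, `[-1, 1]%classic (v ord0 i)].
have A_compact : compact A :=
  @rV_compact R r (fun=> `[-1, 1]%classic) (fun=> @segment_compact R (-1) 1).
have uA : (u @ \oo) A.
  exists 0%N => // k _ i /=; rewrite in_itv /= -ler_norml.
  exact: le_trans (enorm_coord_le _ _) (u_le1 k).
have [w [_ w_cluster]] := A_compact _ _ uA.
exists w => e e0 N.
have tail : (u @ \oo) (u @` [set k | (N <= k)%N]) by exists N => // k /= Nk; exists k.
have e'0 : 0 < e / (r%:R + 1) by rewrite divr_gt0 // ltr_wpDl.
have [_ [[k Nk <-] [_ ball_k]]] := w_cluster _ _ tail (nbhsx_ballx w _ e'0).
exists k; split=> //.
have coord_k i : `|(u k - w) ord0 i| <= e / (r%:R + 1).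
  by have := ball_k ord0 i; rewrite /ball /= !mxE distrC => /ltW.
apply: le_lt_trans (enorm_le_coord (ltW e'0) coord_k) _.
by rewrite mulrA ltr_pdivrMr ?ltr_wpDl // [_ * e]mulrC ltr_pM2l // ltrDl.
Qed.

Lemma not_quadratic_growth_seq (psi : V -> R) S z : ~ quadratic_growth psi S z ->
  exists (t : nat -> R) (u : nat -> V), forall k,
    [/\ 0 < t k, t k <= inv_succ k, enorm (u k) = 1, S (z + t k *: u k)
      & psi (z + t k *: u k) - psi z < inv_succ k * t k ^+ 2].
Proof.
move=> no_growth.
have near_z k : exists y, [/\ S y, enorm (y - z) <= inv_succ k
    & psi y < psi z + inv_succ k * enorm (y - z) ^+ 2].
  apply: contra_notP no_growth => no_y.
  exists (inv_succ k); split; first exact: inv_succ_gt0.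
  exists (inv_succ k); split=> [|y Sy yz]; first exact: inv_succ_gt0.
  by rewrite leNgt; apply/negP => y_lt; apply: no_y; exists y.
have [x x_spec] := choice near_z.
pose t k := enorm (x k - z).
exists t, (fun k => (t k)^-1 *: (x k - z)) => k.
have [Sx xz x_lt] := x_spec k.
have t0 : 0 < t k.
  rewrite lt_def enorm_ge0 andbT; apply/eqP => /enorm_eq0/eqP; rewrite subr_eq0 => /eqP xE.
  by move: x_lt; rewrite xE subrr enorm0 expr0n /= mulr0 addr0 ltxx.
have xE : z + t k *: ((t k)^-1 *: (x k - z)) = x k.
  by rewrite scalerA mulfV ?gt_eqF // scale1r addrC subrK.
rewrite xE ltrBlDl; split=> //.
by rewrite enormZ ger0_norm ?invr_ge0 ?enorm_ge0 // mulVf ?gt_eqF.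
Qed.

Section ClusterDirection.
Variables (psi : V -> R) (S : set V) (z w : V) (t : nat -> R) (u : nat -> V).
Hypothesis seq_spec : forall k,
  [/\ 0 < t k, t k <= inv_succ k, enorm (u k) = 1, S (z + t k *: u k)
    & psi (z + t k *: u k) - psi z < inv_succ k * t k ^+ 2].
Hypothesis w_cluster :
  forall e, 0 < e -> forall N, exists k, (N <= k)%N /\ enorm (u k - w) < e.

Lemma cluster_window d : 0 < d ->
  exists k, [/\ 0 < t k < d, enorm (u k - w) < d & inv_succ k < d].
Proof.
move=> d0; have [N Nd] := inv_succ_lt d0.
have [k [Nk ukw]] := w_cluster d0 N.
have [t0 t_le _ _ _] := seq_spec k.
have kd : inv_succ k < d := le_lt_trans (inv_succ_le Nk) Nd.
by exists k; rewrite t0 (le_lt_trans t_le kd).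
Qed.

Lemma cluster_neq0 : w != 0.
Proof.
apply/eqP => w0; have [k [_]] := w_cluster ltr01 0.
by have [_ _ u1 _ _] := seq_spec k; rewrite w0 subr0 u1 ltxx.
Qed.

Lemma cluster_tangent : tangent_cone S z w.
Proof.
have [k k_spec] := choice (fun j => cluster_window (inv_succ_gt0 j)).
exists (t \o k), (u \o k); split; [|split].
- by move=> j; have [/andP[]] := k_spec j.
- by move=> j; have [_ _ _ Su _] := seq_spec (k j).
- move=> e e0; have [N Ne] := inv_succ_lt e0; exists N => j Nj.
  have [/andP[t0 tj] uj _] := k_spec j; have je := le_lt_trans (inv_succ_le Nj) Ne.
  by rewrite /= gtr0_norm // (lt_trans tj je) (lt_trans uj je).
Qed.

Lemma cluster_dsub_le0 : semidiff psi z -> dsubr psi z w <= 0.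
Proof.
move=> sd; apply/ler_addgt0Pr => e e0; rewrite add0r.
apply: (lim_tw_le (semidiff_lim w sd)) => d d0.
have [k []] := cluster_window (d := Num.min d e) (ltac:(by rewrite lt_min d0 e0)).
rewrite !lt_min => /and3P[t0 td te] /andP[ud _] _.
have [_ _ _ _ growth] := seq_spec k.
exists (t k), (u k); rewrite t0 td; split=> //.
rewrite /dq1 ler_pdivrMr //; apply/ltW/(lt_le_trans growth).
have := inv_succ_gt0 k; have := inv_succ_le1 k; nra.
Qed.

Lemma cluster_d2delta_le L : semidiff psi z -> lim_tw (dq2r psi z) w L ->
  (d2delta S z (fun w' => - dsub psi z w') w <= (- L)%:E)%E.
Proof.
move=> sd dq2rL; apply/lee_addgt0Pr => e e0; apply: liminf_tw_le => d d0.
have [d' [d'0 dq2rLd']] := dq2rL (e / 2) (ltac:(by rewrite divr_gt0)).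
have [k []] := cluster_window (d := Num.min d (Num.min d' (e / 4)))
  (ltac:(by rewrite !lt_min d0 d'0 divr_gt0)).
rewrite !lt_min => /andP[t0 /and3P[td td' _]] /and3P[ud ud' _] /and3P[_ _ ke].
have [_ _ _ Su growth] := seq_spec k.
exists (t k), (u k); rewrite t0 td; split=> //.
rewrite d2delta_quotE // -EFinD lee_fin.
have := dq2rLd' (t k) (u k); rewrite t0 td' => /(_ isT ud').
rewrite dq2rE ?gt_eqF // ltr_norml => /andP[+ _].
have : (psi (z + t k *: u k) - psi z) * (2 / t k ^+ 2) < 2 * inv_succ k.
  by rewrite mulrA ltr_pdivrMr ?exprn_gt0 // mulrC -mulrA ltr_pM2l.
lra.
Qed.

End ClusterDirection.

Lemma quadratic_growth_suff (psi : V -> R) S z : twice_semidiff psi z ->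
  (forall w, tangent_cone S z w -> (0 <= dsub psi z w)%E) ->
  (forall w, tangent_cone S z w -> w != 0 -> dsub psi z w = 0%E ->
     (0 < d2sub psi z w + d2delta S z (fun w' => - dsub psi z w') w)%E) ->
  quadratic_growth psi S z.
Proof.
move=> tsd dsub_ge0 d2_gt0; have sd := tsd.1.
have [//|/not_quadratic_growth_seq[t [u seq_spec]]] := pselect (quadratic_growth psi S z).
have [w w_cluster] : exists w, forall e, 0 < e -> forall N,
    exists k, (N <= k)%N /\ enorm (u k - w) < e.
  by apply: bounded_seq_cluster => k; have [_ _ -> _ _] := seq_spec k.
have wT := cluster_tangent seq_spec w_cluster.
have dw0 : dsub psi z w = 0%E.
  rewrite (dsubE w sd); congr EFin; apply/eqP.
  by rewrite eq_le (cluster_dsub_le0 seq_spec w_cluster sd) -lee_fin -(dsubE w sd) dsub_ge0.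
have [L [d2L dq2rL]] := d2sub_lim w tsd.
have d2_le0 : (L%:E + d2delta S z (fun w' => - dsub psi z w') w <= 0)%E.
  have := leeD2l L%:E (cluster_d2delta_le seq_spec w_cluster sd dq2rL).
  by rewrite -EFinD subrr.
have := d2_gt0 w wT (cluster_neq0 seq_spec w_cluster) dw0.
by rewrite d2L => /lt_le_trans/(_ d2_le0); rewrite ltxx.
Qed.

End SecondOrderConditions.

Theorem mainTheorem2 (R : realType) (r : nat) (psi : 'rV[R]_r -> R)
  (S : set 'rV[R]_r) (zb : 'rV[R]_r) :
  S !=set0 -> closed S -> S zb -> twice_semidiff psi zb ->
  (local_min_on psi S zb ->
     (forall w, tangent_cone S zb w -> (0 <= dsub psi zb w)%E) /\
     (forall w, tangent_cone S zb w -> dsub psi zb w = 0%E ->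
        (0 <= d2sub psi zb w + d2delta S zb (fun w' => - dsub psi zb w') w)%E))
  /\
  ((forall w, tangent_cone S zb w -> (0 <= dsub psi zb w)%E) ->
   (forall w, tangent_cone S zb w -> w != 0 -> dsub psi zb w = 0%E ->
        (0 < d2sub psi zb w + d2delta S zb (fun w' => - dsub psi zb w') w)%E) ->
   (exists eps : R, 0 < eps /\ exists eta : R, 0 < eta /\
      forall z, S z -> enorm (z - zb) <= eta ->
        psi zb + eps * enorm (z - zb) ^+ 2 <= psi z)
   /\ local_min_on psi S zb).
Proof.
move=> _ _ Szb tsd; split.
- move=> zmin; split; first exact: dsub_ge0_local_min tsd.1 zmin.
  by move=> w _ _; apply: d2_sum_ge0_local_min.
- move=> dsub_ge0 d2_gt0.
  have growth := quadratic_growth_suff tsd dsub_ge0 d2_gt0.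
  by split; [exact: growth | exact: quadratic_growth_local_min].
Qed.
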